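(* Suppose Assumptions 1–6 hold. Then $$\inf_{\boldsymbol\lambda\in\Theta_{\alpha,T}}\{(\boldsymbol\lambda-Z_{T\alpha})'\mathcal I_\alpha(\boldsymbol\lambda-Z_{T\alpha})\}=\inf_{\boldsymbol\lambda\in\Lambda}\{(\boldsymbol\lambda-Z_{T\alpha})'\mathcal I_\alpha(\boldsymbol\lambda-Z_{T\alpha})\}+o_{p\alpha}(1).$$
   Context: Setting. Fix an integer $p\ge1$. $\{y_t\}$ is a real-valued time series observed for $t=-p+1,\dots,T$; write $\boldsymbol y_{t-1}=(y_{t-1},\dots,y_{t-p})$ and $\mathcal F_t=\sigma(y_s,\ s\le t)$. For $\tilde\phi=(\tilde\phi_0,\tilde\phi_1,\dots,\tilde\phi_p,\tilde\sigma^2)\in\mathbb R^{p+1}\times(0,\infty)$ let $f_t(\tilde\phi)=\tilde\sigma^{-1}\mathfrak N\big((y_t-\tilde\phi_0-\sum_{i=1}^p\tilde\phi_iy_{t-i})/\tilde\sigma\big)$ with $\mathfrak N(u)=(2\pi)^{-1/2}e^{-u^2/2}$; $\nabla f_t$ denotes the gradient with respect to $\tilde\phi$. Integers $q_1\ge0$, $q_2\ge1$ with $q_1+q_2=p+2$ and a known $(p+2)\times(p+2)$ permutation matrix $P$ are fixed; for $\beta\in\mathbb R^{q_1},\phi\in\mathbb R^{q_2}$ write $f_t(\beta,\phi)=f_t(P^{-1}(\beta,\phi))$. Given a mixing weight $\alpha_t(\alpha,\beta,\phi,\varphi)$ depending on an additional parameter $\alpha$, the two-regime mixture autoregressive log-likelihood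 is $L_T(\alpha,\beta,\phi,\varphi)=\sum_{t=1}^T\log[\alpha_tf_t(\beta,\phi)+(1-\alpha_t)f_t(\beta,\varphi)]$; the null (linear AR) log-likelihood is $L^0_T(\tilde\phi)=\sum_{t=1}^T\log f_t(\tilde\phi)$. Let $\hat{\tilde\phi}_T$ satisfy $L^0_T(\hat{\tilde\phi}_T)=\sup_{\tilde\phi\in\tilde\Phi}L^0_T(\tilde\phi)+o_p(1)$ and $\hat{\tilde\phi}_T=\tilde\phi^*+o_p(1)$. Define $LR_T(\alpha)=2[\sup_{(\beta,\phi,\varphi)\in B\times\Phi\times\Phi}L_T(\alpha,\beta,\phi,\varphi)-\sup_{\tilde\phi\in\tilde\Phi}L^0_T(\tilde\phi)]$ and $LR_T=\sup_{\alpha\in A}LR_T(\alpha)$. Notation. For random quantities $X_{T\alpha}$ indexed by $\alpha\in A$, $X_{T\alpha}=o_{p\alpha}(1)$ (resp. $O_{p\alpha}(1)$) means $\sup_{\alpha\in A}\|X_{T\alpha}\|=o_p(1)$ (resp. $O_p(1)$). $\mathcal B(A,\mathbb R^k)$ (resp. $\mathcal C(A,\mathbb R^k)$) is the space of bounded (resp. continuous) $\mathbb R^k$-valued functions on $A$ with the uniform metric; $\Rightarrow$ denotes weak convergence of processes in such spaces. A set $\Lambda\subset\mathbb R^r$ is a cone if $\lambda\in\Lambda$ implies $a\lambda\in\Lambda$ for all real $a>0$. A collection $\{\Gamma_\alpha,\alpha\in A\}$ of subsets of $\mathbb R^r$ is locally uniformly equal to $\Lambda\subset\mathbb R^r$ if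 there is $\delta>0$ with $\Gamma_\alpha\cap(-\delta,\delta)^r=\Lambda\cap(-\delta,\delta)^r$ for all $\alpha\in A$. $\lambda_{\min},\lambda_{\max}$ denote smallest/largest eigenvalues. Assumption 1. (i) $y_t=\tilde\phi^*_0+\sum_{i=1}^p\tilde\phi^*_iy_{t-i}+\tilde\sigma^*\varepsilon_t$ is a stationary linear Gaussian AR($p$) process, $\varepsilon_t$ i.i.d. $N(0,1)$ with $\varepsilon_t$ independent of $\{y_{t-j},j>0\}$, where $\tilde\phi^*$ is an interior point of a compact set $\tilde\Phi\subset\{\tilde\phi:\tilde\phi_0\in\mathbb R,\ 1-\sum_{i=1}^p\tilde\phi_iz^i\ne0\text{ for }|z|\le1,\ \tilde\sigma^2\in(0,\infty)\}$. (ii) The parameter space of $(\alpha,\beta,\phi,\varphi)$ is $A\times B\times\Phi\times\Phi$ with $A\subset\mathbb R^a$ compact and $B\subset\mathbb R^{q_1}$, $\Phi\subset\mathbb R^{q_2}$ compact such that $(\beta,\phi)\in B\times\Phi$ iff $P^{-1}(\beta,\phi)\in\tilde\Phi$; write $(\beta^*,\phi^* )=P\tilde\phi^*$. (iii) For all $t$ and all parameter values, $\alpha_t(\alpha,\beta,\phi,\varphi)$ is $\sigma(\boldsymbol y_{t-1})$-measurable and lies in $(0,1)$. Assumption 2. For each $\alpha\in A$, estimators $(\hat\beta_{T\alpha},\hat\phi_{T\alpha},\hat\varphi_{T\alpha})\in B\times\Phi\times\Phi$ satisfy (i) $L_T(\alpha,\hat\beta_{T\alpha},\hat\phi_{T\alpha},\hat\varphi_{T\alpha})=\sup_{(\beta,\phi,\varphi)\in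 B\times\Phi\times\Phi}L_T(\alpha,\beta,\phi,\varphi)+o_{p\alpha}(1)$ and (ii) $(\hat\beta_{T\alpha},\hat\phi_{T\alpha},\hat\varphi_{T\alpha})=(\beta^*,\phi^*,\phi^* )+o_{p\alpha}(1)$. Assumption 3. (i) For every $\alpha\in A$ the map $(\pi,\varpi)=\boldsymbol\pi_\alpha(\phi,\varphi)$ from $\Phi\times\Phi$ onto $\Pi_\alpha:=\boldsymbol\pi_\alpha(\Phi\times\Phi)\subset\mathbb R^{2q_2}$ is one-to-one with $\boldsymbol\pi_\alpha$ and $\boldsymbol\pi_\alpha^{-1}$ continuous. (ii) $\boldsymbol\pi_\alpha(\{(\phi,\phi):\phi\in\Phi\})=\Phi\times\{0\}$ and $\boldsymbol\pi_\alpha(\phi^*,\phi^* )=(\pi^*,0)$ with $\pi^*:=\phi^*$. (iii) $(\hat\beta_{T\alpha},\hat\pi_{T\alpha},\hat\varpi_{T\alpha})=(\beta^*,\pi^*,0)+o_{p\alpha}(1)$, where $(\hat\pi_{T\alpha},\hat\varpi_{T\alpha})=\boldsymbol\pi_\alpha(\hat\phi_{T\alpha},\hat\varphi_{T\alpha})$. The reparameterized log-likelihood is $L^\pi_T(\alpha,\beta,\pi,\varpi)=L_T(\alpha,\beta,\boldsymbol\pi_\alpha^{-1}(\pi,\varpi))$. Assumption 4. For some integer $k\ge2$ and every $\alpha\in A$, $\alpha_t(\alpha,\cdot)$ and $\boldsymbol\pi^{-1}_\alpha$ are $k$ times continuously differentiable on the interiors of $B\times\Phi\times\Phi$ and $\Pi_\alpha$,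 respectively. Assumption 5. For each $\alpha\in A$ and $(\beta,\pi,\varpi)\in B\times\Pi_\alpha$, with $\boldsymbol\theta=\boldsymbol\theta(\alpha,\beta,\pi,\varpi)$, $L^\pi_T(\alpha,\beta,\pi,\varpi)-L^\pi_T(\alpha,\beta^*,\pi^*,0)=(T^{-1/2}S_{T\alpha})'[T^{1/2}\boldsymbol\theta]-\tfrac12[T^{1/2}\boldsymbol\theta]'\mathcal I_\alpha[T^{1/2}\boldsymbol\theta]+R_T(\alpha,\beta,\pi,\varpi)$, where: (i) for each $\alpha$, $\boldsymbol\theta(\alpha,\cdot)$ maps $B\times\Pi_\alpha$ onto $\Theta_\alpha\subset\mathbb R^r$, with (a) $\boldsymbol\theta(\alpha,\beta^*,\pi^*,0)=0$ and (b) for every $\epsilon>0$ there is $\delta_\epsilon>0$ with $\inf_{\alpha\in A}\inf_{(\beta,\pi,\varpi)\in B\times\Pi_\alpha:\|(\beta,\pi,\varpi)-(\beta^*,\pi^*,0)\|\ge\epsilon}\|\boldsymbol\theta(\alpha,\beta,\pi,\varpi)\|\ge\delta_\epsilon$; (ii) $S_{T\alpha}=\sum_{t=1}^Ts_{t\alpha}$ is an $\mathbb R^r$-valued $\mathcal F_T$-measurable process indexed by $\alpha\in A$, not depending on $(\beta,\pi,\varpi)$, with sample paths continuous in $\alpha$, and $T^{-1/2}S_{T\bullet}\Rightarrow S_\bullet$ for a mean-zero $\mathbb R^r$-valued Gaussian process $\{S_\alpha:\alpha\in A\}$ with a.s. continuous sample paths and $E[S_\alpha S_\alpha']=E[s_{t\alpha}s_{t\alpha}']=\mathcal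 I_\alpha$; (iii) $\mathcal I_\alpha$ is a nonrandom symmetric $r\times r$ matrix not depending on $(\beta,\pi,\varpi)$, continuous in $\alpha$, with $0<\inf_{\alpha\in A}\lambda_{\min}(\mathcal I_\alpha)$ and $\sup_{\alpha\in A}\lambda_{\max}(\mathcal I_\alpha)<\infty$; (iv) for every nonrandom sequence of positive scalars $\gamma_T\to0$, $\sup_{(\beta,\pi,\varpi)\in B\times\Pi_\alpha:\|(\beta,\pi,\varpi)-(\beta^*,\pi^*,0)\|\le\gamma_T}|R_T(\alpha,\beta,\pi,\varpi)|/(1+\|T^{1/2}\boldsymbol\theta(\alpha,\beta,\pi,\varpi)\|)^2=o_{p\alpha}(1)$. Assumption 6. $\{\Theta_\alpha,\alpha\in A\}$ is locally uniformly equal to a cone $\Lambda\subset\mathbb R^r$. Assumption 7. With $q_\theta=q_1+q_2$ and $q_\vartheta=r-q_\theta$, $\Lambda=\mathbb R^{q_\theta}\times\Lambda_\vartheta$ for a cone $\Lambda_\vartheta\subset\mathbb R^{q_\vartheta}$. Assumption 8. Partitioning $S_{T\alpha}=(S_{T\theta\alpha},S_{T\vartheta\alpha})$ with $S_{T\theta\alpha}$ of dimension $q_\theta$, $S_{T\theta\alpha}=S^0_T:=\sum_{t=1}^T\nabla f_t(\tilde\phi^* )/f_t(\tilde\phi^* )$ for all $\alpha$. Let $\mathcal I^0=E[(\nabla f_t(\tilde\phi^* )/f_t(\tilde\phi^* ))(\nabla f_t(\tilde\phi^* )/f_t(\tilde\phi^* ))']$. Further notation. $Z_{T\alpha}=\mathcal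 I_\alpha^{-1}T^{-1/2}S_{T\alpha}$, $Z_\alpha=\mathcal I_\alpha^{-1}S_\alpha$. Partition $S_\alpha=(S_{\theta\alpha},S_{\vartheta\alpha})$, $Z_\alpha=(Z_{\theta\alpha},Z_{\vartheta\alpha})$, $\boldsymbol\lambda=(\boldsymbol\lambda_\theta,\boldsymbol\lambda_\vartheta)$ and $\mathcal I_\alpha$ into blocks $\mathcal I_{\theta\theta\alpha},\mathcal I_{\theta\vartheta\alpha},\mathcal I_{\vartheta\theta\alpha},\mathcal I_{\vartheta\vartheta\alpha}$ conformably with dimensions $q_\theta,q_\vartheta$; $(\mathcal I_\alpha^{-1})_{\vartheta\vartheta}$ is the bottom-right $q_\vartheta\times q_\vartheta$ block of $\mathcal I_\alpha^{-1}$. $\Theta_{\alpha,T}=\{T^{1/2}\boldsymbol\theta:\boldsymbol\theta\in\Theta_\alpha\}$. *)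

From HB Require Import structures.
From mathcomp Require Import all_boot all_order all_algebra.
From mathcomp Require Import all_classical all_reals all_analysis.
Set Implicit Arguments. Unset Strict Implicit. Unset Printing Implicit Defensive.
Import Order.TTheory GRing.Theory Num.Theory.
Import numFieldNormedType.Exports.
Local Open Scope classical_set_scope.
Local Open Scope ring_scope.

Section Defs.
Context {R : realType}.

Definition qform (r : nat) (M : 'M[R]_r) (v : 'cV[R]_r) : R :=
  (v^T *m M *m v) ord0 ord0.

Definition is_cone (r : nat) (L : set 'cV[R]_r) : Prop :=
  forall l a, L l -> 0 < a -> L (a *: l).

Definition cube (r : nat) (delta : R) : set 'cV[R]_r :=
  [set v | forall i, `|v i ord0| < delta].

Definition loc_unif_equal (a r : nat) (A : set 'rV[R]_a)
  (G : 'rV[R]_a -> set 'cV[R]_r) (L : set 'cV[R]_r) : Prop :=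
  exists delta : R, 0 < delta /\
    forall alpha, A alpha -> G alpha `&` @cube r delta = L `&` @cube r delta.

(* outer probability of the (possibly non-measurable) event E is <= e *)
Definition outer_prob_le d (Om : measurableType d) (P : probability Om R)
  (E : set Om) (e : R) : Prop :=
  exists F, measurable F /\ E `<=` F /\ (P F <= e%:E)%E.

(* X_{T alpha} = o_{p alpha}(1): sup_{alpha in A} |X_{T alpha}| -> 0 in (outer) probability *)
Definition o_p_unif d (Om : measurableType d) (P : probability Om R) (a : nat)
  (A : set 'rV[R]_a) (X : nat -> Om -> 'rV[R]_a -> R) : Prop :=
  forall eps eta : R, 0 < eps -> 0 < eta ->
    \forall T \near \oo,
      outer_prob_le P [set w | exists alpha, A alpha /\ eps < `|X T w alpha|] eta.

(* Y_{T alpha} = O_{p alpha}(1): sup_{alpha in A} ||Y_{T alpha}|| is bounded in (outer) probability *)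
Definition O_p_unif d (Om : measurableType d) (P : probability Om R) (a r : nat)
  (A : set 'rV[R]_a) (Y : nat -> Om -> 'rV[R]_a -> 'cV[R]_r) : Prop :=
  forall eta : R, 0 < eta -> exists M : R,
    \forall T \near \oo,
      outer_prob_le P [set w | exists alpha, A alpha /\ M < `|Y T w alpha|] eta.

Definition scaled_score d (Om : measurableType d) (a r : nat)
  (S : nat -> Om -> 'rV[R]_a -> 'cV[R]_r) (T : nat) (w : Om) (alpha : 'rV[R]_a)
  : 'cV[R]_r := (Num.sqrt (T%:R : R))^-1 *: S T w alpha.

Definition Zstat d (Om : measurableType d) (a r : nat)
  (S : nat -> Om -> 'rV[R]_a -> 'cV[R]_r) (I : 'rV[R]_a -> 'M[R]_r)
  (T : nat) (w : Om) (alpha : 'rV[R]_a) : 'cV[R]_r :=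
  invmx (I alpha) *m scaled_score S T w alpha.

Definition scaled_set (r : nat) (Th : set 'cV[R]_r) (T : nat) : set 'cV[R]_r :=
  [set Num.sqrt (T%:R : R) *: th | th in Th].

Definition inf_qform (r : nat) (M : 'M[R]_r) (z : 'cV[R]_r) (L : set 'cV[R]_r) : R :=
  inf [set qform M (l - z) | l in L].

End Defs.

From HB Require Import structures.
From mathcomp Require Import all_boot all_order all_algebra.
From mathcomp Require Import all_classical all_reals all_analysis.
From mathcomp Require Import lra.
Set Implicit Arguments. Unset Strict Implicit. Unset Printing Implicit Defensive.
Import Order.TTheory GRing.Theory Num.Theory.
Import numFieldNormedType.Exports.
Local Open Scope classical_set_scope.
Local Open Scope ring_scope.

(* With probability at least 1 - eta, sup_alpha |T^{-1/2} S_{T alpha}| <= M0, and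
   on that event the difference of the two infima is exactly 0 for every alpha
   once T is large.  The eigenvalues of I_alpha are at least c > 0, hence so is
   its Rayleigh quotient (whose minimum over the unit sphere is an eigenvalue).
   So every lambda whose objective is at most its value at lambda = 0 has
   coordinates of size O(M0 / c).  Theta_alpha and Lambda agree on
   (-delta, delta)^r and Lambda is a cone, so Theta_{alpha,T} and Lambda agree on
   (-T^{1/2} delta, T^{1/2} delta)^r, which contains all such lambda once T is
   large: both infima are then taken over the same set. *)

Section SymmetricForm.
Context {R : realType} {n : nat}.
Implicit Types (M : 'M[R]_n) (u v w : 'rV[R]_n).

Definition form M u v : R := (u *m M *m v^T) 0 0.
Definition sqnorm v : R := form 1 v v.

Lemma form_sym M u v : M^T = M -> form M u v = form M v u.
Proof.
move=> sM; rewrite /form.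
have -> : (u *m M *m v^T) 0 0 = ((u *m M *m v^T)^T) 0 0 by rewrite [RHS]mxE.
by rewrite !trmx_mul trmxK sM mulmxA.
Qed.

Lemma formZl M k u v : form M (k *: u) v = k * form M u v.
Proof. by rewrite /form -!scalemxAl mxE. Qed.

Lemma formZr M k u v : form M u (k *: v) = k * form M u v.
Proof. by rewrite /form linearZ /= -scalemxAr mxE. Qed.

Lemma formBl M u v w : form M (u - v) w = form M u w - form M v w.
Proof. by rewrite /form !mulmxBl !mxE. Qed.

Lemma formBr M u v w : form M w (u - v) = form M w u - form M w v.
Proof. by rewrite /form linearB /= mulmxBr !mxE. Qed.

Lemma form_subscalar M k v : form (M - k%:M) v v = form M v v - k * sqnorm v.
Proof. by rewrite /sqnorm /form mulmxBr mulmxBl mul_mx_scalar mulmx1 -scalemxAl !mxE. Qed.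

Lemma sqnormE v : sqnorm v = \sum_i v 0 i ^+ 2.
Proof. by rewrite /sqnorm /form mulmx1 mxE; apply: eq_bigr => i _; rewrite mxE expr2. Qed.

Lemma sqnorm_ge0 v : 0 <= sqnorm v.
Proof. by rewrite sqnormE; apply: sumr_ge0 => i _; exact: sqr_ge0. Qed.

Lemma sqnorm_eq0 v : sqnorm v = 0 -> v = 0.
Proof.
rewrite sqnormE => /psumr_eq0P v0; apply/rowP => i; rewrite mxE.
by apply/eqP; rewrite -sqrf_eq0; apply/eqP/v0 => // j _; exact: sqr_ge0.
Qed.

Lemma sqnormZ k v : sqnorm (k *: v) = k ^+ 2 * sqnorm v.
Proof. by rewrite /sqnorm formZl formZr mulrA expr2. Qed.

Lemma form_continuous M : continuous (fun v => form M v v).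
Proof.
have -> : (fun v => form M v v) = fun v => \sum_j \sum_i v 0 i * M i j * v 0 j.
  apply/funext => v; rewrite /form mxE; apply: eq_bigr => j _.
  by rewrite mxE mulr_suml; apply: eq_bigr => i _; rewrite mxE.
apply: (@continuous_big R _ +%R 0 xpredT add_continuous _ _
  (fun j v => \sum_i v 0 i * M i j * v 0 j)) => j _.
apply: (@continuous_big R _ +%R 0 xpredT add_continuous _ _
  (fun i v => v 0 i * M i j * v 0 j)) => i _ v.
have coord_i := @coord_continuous R 1 n 0 i v.
have coord_j := @coord_continuous R 1 n 0 j v.
have cst_ij : {for v, continuous (fun=> M i j)} by exact: cst_continuous.
exact: continuousM (continuousM coord_i cst_ij) coord_j.
Qed.

Lemma form_psd_eq0 B u : B^T = B -> (forall v, 0 <= form B v v) ->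
  form B u u = 0 -> u *m B = 0.
Proof.
move=> sB psdB Bu0; set w := u *m B.
have uBw : form B u w = sqnorm w by rewrite /sqnorm /form mulmx1.
apply: sqnorm_eq0; apply/eqP; rewrite eq_le sqnorm_ge0 andbT leNgt.
apply/negP => w_gt0.
have Bw_ge0 := psdB w.
pose t := sqnorm w / (form B w w + 1).
have t_gt0 : 0 < t by rewrite divr_gt0 // ltr_wpDl.
have tE : t * (form B w w + 1) = sqnorm w by rewrite mulfVK // gt_eqF // ltr_wpDl.
(* with q(u) = 0, q(u - t w) = t (t q(w) - 2 |w|^2) < 0 for this t *)
have := psdB (u - t *: w).
rewrite formBl !formBr !formZl !formZr (form_sym w u sB) Bu0 uBw.
nra.
Qed.

Lemma sphere_compact : compact [set v : 'rV[R]_n | sqnorm v = 1].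
Proof.
apply: (@subclosed_compact _ _
  [set v : 'rV[R]_n | forall i, `[(-1 : R), 1]%classic (v 0 i)]).
- apply: (@preimage_closed _ _ sqnorm [set 1]); last exact: closed_eq.
  by move=> v _; exact: form_continuous.
- exact: (@rV_compact R n (fun=> `[(-1 : R), 1]%classic)
    (fun=> @segment_compact R (-1) 1)).
- move=> v /= v1 i; rewrite in_itv /=.
  have : v 0 i ^+ 2 <= 1.
    rewrite -v1 sqnormE (bigD1 i) //= lerDl.
    by apply: sumr_ge0 => j _; exact: sqr_ge0.
  by move=> vi; apply/andP; split; nra.
Qed.

Lemma form_ge_sphere_min M mu v :
  (forall u, sqnorm u = 1 -> mu <= form M u u) -> mu * sqnorm v <= form M v v.
Proof.
move=> mu_min; have [v0|v_neq0] := eqVneq (sqnorm v) 0.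
  by rewrite v0 mulr0 (sqnorm_eq0 v0) /form !mul0mx mxE.
have v_gt0 : 0 < sqnorm v by rewrite lt_neqAle eq_sym v_neq0 sqnorm_ge0.
pose k := (Num.sqrt (sqnorm v))^-1.
have kk : k ^+ 2 * sqnorm v = 1.
  by rewrite /k exprVn sqr_sqrtr ?sqnorm_ge0 // mulVf // gt_eqF.
have := mu_min (k *: v); rewrite sqnormZ formZl formZr mulrA -expr2 => /(_ kk).
by move=> /(ler_wpM2r (ltW v_gt0)); rewrite mulrAC kk mul1r.
Qed.

Lemma sym_form_min_eigenvalue M u : M^T = M -> u != 0 ->
  exists2 mu, eigenvalue M mu & forall v, mu * sqnorm v <= form M v v.
Proof.
move=> sM u_neq0.
have u_gt0 : 0 < sqnorm u.
  rewrite lt_neqAle sqnorm_ge0 andbT eq_sym.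
  by apply: contra u_neq0 => /eqP/sqnorm_eq0 ->.
have sphere0 : [set v : 'rV[R]_n | sqnorm v = 1] !=set0.
  exists ((Num.sqrt (sqnorm u))^-1 *: u).
  by rewrite /= sqnormZ exprVn sqr_sqrtr ?sqnorm_ge0 // mulVf // gt_eqF.
have [u0 u0S u0_min] := compact_EVT_min sphere0 sphere_compact
  (continuous_subspaceT (form_continuous (M:=M))).
have u0_1 : sqnorm u0 = 1 by move: u0S; rewrite inE.
set mu := form M u0 u0.
have mu_min v : mu * sqnorm v <= form M v v.
  by apply: form_ge_sphere_min => w w1; apply: u0_min; rewrite inE.
exists mu => //.
have psdB v : 0 <= form (M - mu%:M) v v by rewrite form_subscalar subr_ge0.
have sB : (M - mu%:M)^T = M - mu%:M by rewrite linearB /= tr_scalar_mx sM.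
have u0B : u0 *m (M - mu%:M) = 0.
  by apply: form_psd_eq0 sB psdB _; rewrite form_subscalar u0_1 mulr1 subrr.
apply/eigenvalueP; exists u0.
  by apply/eqP; rewrite -subr_eq0 -mul_mx_scalar -mulmxBr u0B.
by apply: contra_eq_neq u0_1 => ->; rewrite /sqnorm /form !mul0mx mxE eq_sym oner_neq0.
Qed.

Lemma form_ge_eigenvalue_lb M c v : M^T = M ->
  (forall x, eigenvalue M x -> c <= x) -> c * sqnorm v <= form M v v.
Proof.
move=> sM eigM; have [->|v_neq0] := eqVneq v 0.
  by rewrite /sqnorm /form !mul0mx mxE mulr0.
have [mu /eigM c_mu mu_min] := sym_form_min_eigenvalue sM v_neq0.
exact: le_trans (ler_wpM2r (sqnorm_ge0 v) c_mu) (mu_min v).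
Qed.

End SymmetricForm.

Section CoerciveForm.
Context {R : realType} {r : nat}.
Implicit Types (M : 'M[R]_r) (v z l : 'cV[R]_r).

Lemma coord_sqr_le_sum v i : v i 0 ^+ 2 <= \sum_j v j 0 ^+ 2.
Proof.
by rewrite (bigD1 i) //= lerDl; apply: sumr_ge0 => j _; exact: sqr_ge0.
Qed.

Lemma qformN M v : qform M (- v) = qform M v.
Proof.
by rewrite /qform mulmxN (raddfN (@trmx R r 1)) !mulNmx opprK.
Qed.

Lemma qform_ge_eigenvalue_lb M c v : M^T = M ->
  (forall x, eigenvalue M x -> c <= x) -> c * \sum_i v i 0 ^+ 2 <= qform M v.
Proof.
move=> sM eigM.
have -> : qform M v = form M v^T v^T by rewrite /qform /form trmxK.
have -> : \sum_i v i 0 ^+ 2 = sqnorm v^T.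
  by rewrite sqnormE; apply: eq_bigr => i _; rewrite mxE.
exact: form_ge_eigenvalue_lb.
Qed.

Lemma qform_mulmx_bound M c z : 0 < c ->
  (forall v, c * \sum_i v i 0 ^+ 2 <= qform M v) ->
  c * qform M z <= \sum_i (M *m z) i 0 ^+ 2 /\
  c ^+ 2 * \sum_i z i 0 ^+ 2 <= \sum_i (M *m z) i 0 ^+ 2.
Proof.
move=> c_gt0 M_coercive; set s := M *m z.
have qzE : qform M z = \sum_i z i 0 * s i 0.
  by rewrite /qform -mulmxA mxE; apply: eq_bigr => i _; rewrite mxE.
have cz := M_coercive z; rewrite qzE in cz *.
have amgm : 2 * c * \sum_i z i 0 * s i 0 <=
    c ^+ 2 * \sum_i z i 0 ^+ 2 + \sum_i s i 0 ^+ 2.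
  rewrite !mulr_sumr -big_split /=; apply: ler_sum => i _.
  by have := sqr_ge0 (c * z i 0 - s i 0); nra.
have z_ge0 : 0 <= \sum_i z i 0 ^+ 2 by apply: sumr_ge0 => i _; exact: sqr_ge0.
by split; nra.
Qed.

Lemma qform_sublevel_coord_bound M c z l i : 0 < c ->
  (forall v, c * \sum_i v i 0 ^+ 2 <= qform M v) -> qform M (l - z) <= qform M z ->
  c ^+ 2 * l i 0 ^+ 2 <= 4 * \sum_j (M *m z) j 0 ^+ 2.
Proof.
move=> c_gt0 M_coercive lz; have [cqz cz] := qform_mulmx_bound z c_gt0 M_coercive.
have clz := M_coercive (l - z).
have lz_i := coord_sqr_le_sum (l - z) i.
have z_i := coord_sqr_le_sum z i.
have l_i : l i 0 ^+ 2 <= 2 * (l - z) i 0 ^+ 2 + 2 * z i 0 ^+ 2.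
  by rewrite !mxE; have := sqr_ge0 (l i 0 - 2 * z i 0); nra.
have c2lz : c ^+ 2 * \sum_j (l - z) j 0 ^+ 2 <= \sum_j (M *m z) j 0 ^+ 2.
  by nra.
by nra.
Qed.

End CoerciveForm.

Lemma inf_image_setI {R : realType} {T : Type} (E C : set T) (f : T -> R) x0 :
  (forall x, E x -> 0 <= f x) -> E x0 -> (forall x, E x -> f x <= f x0 -> C x) ->
  inf (f @` E) = inf (f @` (E `&` C)).
Proof.
move=> f_ge0 Ex0 EC.
have lbE : has_lbound (f @` E) by exists 0 => _ [x Ex <-]; exact: f_ge0.
have lbEC : has_lbound (f @` (E `&` C)) by exists 0 => _ [x [Ex _] <-]; exact: f_ge0.
have ECx0 : (E `&` C) x0 by split => //; exact: EC.
apply/eqP; rewrite eq_le; apply/andP; split.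
  apply: lb_le_inf; first by exists (f x0), x0.
  by move=> _ [x [Ex _] <-]; apply: ge_inf => //; exists x.
apply: lb_le_inf; first by exists (f x0), x0.
move=> _ [x Ex <-]; have [fx_le|fx_gt] := leP (f x) (f x0).
  by apply: ge_inf => //; exists x => //; split => //; exact: EC.
apply: le_trans (ltW fx_gt); apply: ge_inf => //; exists x0 => //.
Qed.

Lemma scale_cube {R : realType} r (K d : R) (v : 'cV[R]_r) : 0 < K ->
  cube (K * d) (K *: v) <-> cube d v.
Proof.
move=> K_gt0; rewrite /cube /=.
by split=> vd i; move: (vd i); rewrite mxE normrM (gtr0_norm K_gt0) (ltr_pM2l K_gt0).
Qed.

Lemma scale_setI_cube {R : realType} r (Th Lam : set 'cV[R]_r) (K d : R) :
  0 < K -> is_cone Lam -> Th `&` cube d = Lam `&` cube d ->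
  [set K *: th | th in Th] `&` cube (K * d) = Lam `&` cube (K * d).
Proof.
move=> K_gt0 Lam_cone ThLam; apply/seteqP; split=> l.
  move=> [[th Th_th <-] /(scale_cube _ _ K_gt0) th_d]; split; last exact/scale_cube.
  have [Lam_th _] : (Lam `&` cube d) th by rewrite -ThLam.
  exact: Lam_cone.
move=> [Lam_l l_Kd]; pose th := K^-1 *: l.
have Lam_th : Lam th by apply: Lam_cone; rewrite ?invr_gt0.
have lE : l = K *: th by rewrite scalerA mulfV ?gt_eqF // scale1r.
rewrite lE in l_Kd *; split => //.
have [Th_th _] : (Th `&` cube d) th.
  by rewrite ThLam; split; last exact/(scale_cube _ _ K_gt0).
by exists th.
Qed.

Lemma unitmx_noeigenvalue0 {F : fieldType} n (M : 'M[F]_n) :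
  ~~ eigenvalue M 0 -> M \in unitmx.
Proof.
by rewrite -row_free_unit -kermx_eq0 /eigenvalue /eigenspace negbK raddf0 subr0.
Qed.

Lemma mx_entry_le_norm {R : realType} m n (A : 'M[R]_(m, n)) i j : `|A i j| <= `|A|.
Proof.
by rewrite [leRHS]/Num.norm /= mx_normrE; apply/bigmax_geP; right; exists (i, j).
Qed.

Lemma sum_sqr_le_norm {R : realType} r (s : 'cV[R]_r) :
  \sum_i s i 0 ^+ 2 <= r%:R * `|s| ^+ 2.
Proof.
rewrite mulr_natl -[r in _ *+ r]card_ord -sumr_const; apply: ler_sum => i _.
have := mx_entry_le_norm s i 0; have := normr_ge0 (s i 0).
rewrite -(real_normK (num_real (s i 0))); nra.
Qed.

Lemma inf_qform_scaled_set_eq {R : realType} r (M : 'M[R]_r) (c d : R)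
    (Th Lam : set 'cV[R]_r) T (s : 'cV[R]_r) :
  M^T = M -> 0 < c -> (forall x, eigenvalue M x -> c <= x) -> 0 < d ->
  Th 0 -> is_cone Lam -> Th `&` cube d = Lam `&` cube d ->
  4 * \sum_i s i 0 ^+ 2 < c ^+ 2 * (T%:R * d ^+ 2) ->
  inf_qform M (invmx M *m s) (scaled_set Th T) = inf_qform M (invmx M *m s) Lam.
Proof.
move=> sM c_gt0 eigM d_gt0 Th0 Lam_cone ThLam s_small.
have M_coercive v := qform_ge_eigenvalue_lb v sM eigM.
have M_unit : M \in unitmx.
  by apply: unitmx_noeigenvalue0; apply/negP => /eigM; rewrite leNgt c_gt0.
set z := invmx M *m s; have Mz : M *m z = s by rewrite mulKVmx.
set K := Num.sqrt (T%:R : R).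
have K_gt0 : 0 < K.
  rewrite sqrtr_gt0 ltr0n lt0n; apply: contraTneq s_small => ->.
  by rewrite mul0r mulr0 -leNgt mulr_ge0 // sumr_ge0 // => i _; exact: sqr_ge0.
have qform_ge0 v : 0 <= qform M v.
  apply: le_trans (M_coercive v); apply: mulr_ge0; first exact: ltW.
  by apply: sumr_ge0 => i _; exact: sqr_ge0.
have sublevel l : qform M (l - z) <= qform M (0 - z) -> cube (K * d) l.
  rewrite sub0r qformN => lz i.
  have := qform_sublevel_coord_bound i c_gt0 M_coercive lz; rewrite Mz => cl.
  have l2 : `|l i 0| ^+ 2 < (K * d) ^+ 2.
    rewrite -(ltr_pM2l (exprn_gt0 2 c_gt0)) real_normK ?num_real //.
    by rewrite exprMn sqr_sqrtr ?ler0n //; apply: le_lt_trans s_small.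
  by have := normr_ge0 (l i 0); have := mulr_gt0 K_gt0 d_gt0; nra.
have Lam0 : Lam 0.
  have : (Th `&` cube d) 0 by split => // i; rewrite mxE normr0.
  by rewrite ThLam => -[].
have ThT0 : scaled_set Th T 0 by exists 0 => //; rewrite scaler0.
pose f l := qform M (l - z).
have f_ge0 E l : E l -> 0 <= f l by move=> _; exact: qform_ge0.
rewrite /inf_qform -/f (inf_image_setI (f_ge0 _) ThT0 (fun l _ => sublevel l)).
rewrite (inf_image_setI (f_ge0 _) Lam0 (fun l _ => sublevel l)).
by rewrite /scaled_set (scale_setI_cube K_gt0 Lam_cone ThLam).
Qed.

Theorem lemma3 (R : realType) (d : measure_display) (Om : measurableType d)
  (P : probability Om R) (a r : nat) (A : set 'rV[R]_a)
  (S : nat -> Om -> 'rV[R]_a -> 'cV[R]_r) (I : 'rV[R]_a -> 'M[R]_r)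
  (Theta : 'rV[R]_a -> set 'cV[R]_r) (Lambda : set 'cV[R]_r) :
  compact A ->
  (forall T w, {within A, continuous (S T w)}) ->
  O_p_unif P A (scaled_score S) ->
  (forall alpha, A alpha -> (I alpha)^T = I alpha) ->
  {within A, continuous I} ->
  (exists c C : R, 0 < c /\
     forall alpha, A alpha -> forall x, eigenvalue (I alpha) x -> c <= x <= C) ->
  (forall alpha, A alpha -> Theta alpha 0) ->
  is_cone Lambda ->
  loc_unif_equal A Theta Lambda ->
  o_p_unif P A (fun T w alpha =>
    inf_qform (I alpha) (Zstat S I T w alpha) (scaled_set (Theta alpha) T)
    - inf_qform (I alpha) (Zstat S I T w alpha) Lambda).
Proof.
move=> _ _ S_bounded I_sym _ [c [C [c_gt0 I_eig]]] Theta0 Lambda_cone.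
move=> [delta [delta_gt0 Theta_Lambda]] eps eta eps_gt0 eta_gt0.
have [M0 S_le_M0] := S_bounded eta eta_gt0.
pose W := 4 * (r%:R * M0 ^+ 2).
have T_large := nbhs_infty_ger (W / (c ^+ 2 * delta ^+ 2) + 1).
apply: filterS2 S_le_M0 T_large => T [F [mF [EF PF]]] T_ge.
exists F; split => //; split => // w [alpha [A_alpha diff_gt]]; apply: EF.
exists alpha; split => //; rewrite ltNge; apply/negP => s_le.
have cd_gt0 : 0 < c ^+ 2 * delta ^+ 2 by rewrite mulr_gt0 ?exprn_gt0.
have s_small : 4 * \sum_i scaled_score S T w alpha i 0 ^+ 2 <
    c ^+ 2 * (T%:R * delta ^+ 2).
  apply: (@le_lt_trans _ _ W).
    rewrite ler_pM2l //; apply: le_trans (sum_sqr_le_norm _) _.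
    by rewrite ler_wpM2l // lerXn2r ?nnegrE // (le_trans _ s_le).
  by rewrite mulrCA -ltr_pdivrMr //; apply: lt_le_trans T_ge; rewrite ltrDl.
move: diff_gt; rewrite /Zstat.
rewrite (inf_qform_scaled_set_eq (I_sym _ A_alpha) c_gt0
  (fun x ex => proj1 (andP (I_eig _ A_alpha x ex))) delta_gt0 (Theta0 _ A_alpha)
  Lambda_cone (Theta_Lambda _ A_alpha) s_small).
by rewrite subrr normr0 ltNge ltW.
Qed.
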